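(* For $n\in\{0,1,2,\dots\}$ define \[ \omega_n=\begin{cases}\dfrac{2n+3}{n+1}\,\dfrac{\Gamma\left(\frac n2+1\right)}{\Gamma\left(\frac{n+1}{2}\right)}, & n\text{ odd},\\[3ex] (n+1)\dfrac{\Gamma\left(\frac{n+1}{2}\right)}{\Gamma\left(\frac n2+1\right)}, & n\text{ even}.\end{cases} \] Then the sequence $(\omega_n)_{n\ge0}$ is positive and strictly increasing, and the sequence $(\tau_n)_{n\ge0}$ given by $\tau_n=\omega_{n+1}-\omega_n$ is positive and non-increasing.
   Context: $\Gamma$ denotes the Gamma function. *)

From Stdlib Require Import Reals Lra Lia.
From Coquelicot Require Import Coquelicot.
Open Scope R_scope.

Definition Gamma (x : R) : R :=
  RInt_gen (fun t => Rpower t (x - 1) * exp (- t))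
           (at_right 0) (Rbar_locally p_infty).

Definition omega (n : nat) : R :=
  if Nat.odd n then
    (2 * INR n + 3) / (INR n + 1) * (Gamma (INR n / 2 + 1) / Gamma ((INR n + 1) / 2))
  else
    (INR n + 1) * (Gamma ((INR n + 1) / 2) / Gamma (INR n / 2 + 1)).

Definition tau (n : nat) : R := omega (S n) - omega n.

(* The integration by parts Gamma(x + 1) = x Gamma(x), against the primitive
   t^x e^(-t), together with the convergence of the integrals at 1/2 and 1, makes
   every Gamma((n + 1)/2) positive and gives q (n + 1) * q n = (n + 1)/2 for
   q n = Gamma((n + 2)/2) / Gamma((n + 1)/2).  In terms of q n one finds
   tau n = (n + 1) / (2 (n + 2) q n) for even n and tau n = q n / (n + 1) for odd n,
   hence tau (n + 1) = tau n for even n and tau (n + 1) = (n + 2)/(n + 3) * tau n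
   for odd n. *)

From Stdlib Require Import Reals Lra Classical.
From Coquelicot Require Import Coquelicot.
Open Scope R_scope.

Lemma Rpower_pos (a y : R) : 0 < Rpower a y.
Proof. apply exp_pos. Qed.

Lemma filter_prod_at_right_0_pinfty (P : R * R -> Prop) :
  (forall a b, 0 < a -> 0 < b -> P (a, b)) ->
  filter_prod (at_right 0) (Rbar_locally p_infty) P.
Proof.
  intro HP. apply (Filter_prod _ _ _ (fun a => 0 < a) (fun b => 0 < b)); auto.
  - exists (mkposreal 1 Rlt_0_1). auto.
  - exists 0. auto.
Qed.

Definition gamma_integrand (x t : R) : R := Rpower t (x - 1) * exp (- t).

(* [Gamma x] is an unspecified value where the integral diverges, so facts about it
   are derived from convergence witnesses. *)
Definition is_Gamma (x L : R) : Prop :=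
  is_RInt_gen (gamma_integrand x) (at_right 0) (Rbar_locally p_infty) L.

Lemma is_Gamma_unique (x L : R) : is_Gamma x L -> Gamma x = L.
Proof. exact (is_RInt_gen_unique _ L). Qed.

Lemma gamma_integrand_pos (x t : R) : 0 < gamma_integrand x t.
Proof. apply Rmult_lt_0_compat; [apply Rpower_pos | apply exp_pos]. Qed.

Lemma is_derive_Rpower_mul_exp_opp (x t : R) : 0 < t ->
  is_derive (fun u => Rpower u x * exp (- u)) t
    (x * gamma_integrand x t - gamma_integrand (x + 1) t).
Proof.
  intro Ht. unfold gamma_integrand. replace (x + 1 - 1) with x by ring.
  replace (x * _ - _) with
    (plus (mult (x * Rpower t (x - 1)) (exp (- t))) (mult (Rpower t x) (- exp (- t))))
    by (unfold plus, mult; simpl; ring).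
  apply (is_derive_mult (fun u => Rpower u x) (fun u => exp (- u))).
  - apply is_derive_Reals, derivable_pt_lim_power, Ht.
  - auto_derive; auto; ring.
  - intros; apply Rmult_comm.
Qed.

Lemma continuous_gamma_integrand (x t : R) : 0 < t ->
  continuous (gamma_integrand x) t.
Proof.
  intro Ht. apply (continuous_mult (fun u => Rpower u (x - 1)) (fun u => exp (- u))).
  - apply (ex_derive_continuous (V := R_NormedModule)). eexists.
    apply is_derive_Reals, derivable_pt_lim_power, Ht.
  - apply (ex_derive_continuous (V := R_NormedModule)). auto_derive; auto.
Qed.

Lemma lim_Rpower_mul_exp_opp_0 (x : R) : 0 < x ->
  filterlim (fun t => Rpower t x * exp (- t)) (at_right 0) (locally 0).
Proof.
  intro Hx. apply filterlim_locally. intro eps.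
  exists (mkposreal _ (Rpower_pos eps (/ x))). intros t Ht Ht0.
  change (Rabs (t - 0) < Rpower eps (/ x)) in Ht.
  rewrite Rminus_0_r, Rabs_pos_eq in Ht by lra.
  change (Rabs (Rpower t x * exp (- t) - 0) < eps).
  rewrite Rminus_0_r, Rabs_pos_eq by (left; apply Rmult_lt_0_compat; [apply Rpower_pos | apply exp_pos]).
  assert (Hexp : exp (- t) <= 1) by (rewrite <- exp_0; left; apply exp_increasing; lra).
  assert (Hpow : Rpower t x < eps).
  { replace (pos eps) with (Rpower (Rpower eps (/ x)) x).
    - apply Rlt_Rpower_l; auto.
    - rewrite Rpower_mult, Rinv_l, Rpower_1 by (apply cond_pos || lra). reflexivity. }
  pose proof (Rpower_pos t x). nra.
Qed.

(* [ln y <= y - 1] at [y = t / (2 x)]. *)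
Lemma mul_ln_le_half (x t : R) : 0 < x -> 0 < t -> x * ln t <= x * ln (2 * x) - x + t / 2.
Proof.
  intros Hx Ht.
  assert (Hln : ln (t / (2 * x)) <= t / (2 * x) - 1).
  { pose proof (exp_ineq1_le (ln (t / (2 * x)))) as H.
    rewrite exp_ln in H by (apply Rdiv_lt_0_compat; lra). lra. }
  rewrite ln_div in Hln by lra.
  apply Rmult_le_compat_l with (r := x) in Hln; [|lra].
  replace (x * (t / (2 * x) - 1)) with (t / 2 - x) in Hln by (field; lra). lra.
Qed.

Lemma lim_Rpower_mul_exp_opp_pinfty (x : R) : 0 < x ->
  filterlim (fun t => Rpower t x * exp (- t)) (Rbar_locally p_infty) (locally 0).
Proof.
  intro Hx. apply filterlim_locally. intro eps.
  exists (Rmax 0 (2 * (x * ln (2 * x) - x - ln eps))). intros t Ht.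
  assert (Ht0 : 0 < t) by (eapply Rle_lt_trans; [apply Rmax_l | exact Ht]).
  assert (Ht1 : 2 * (x * ln (2 * x) - x - ln eps) < t)
    by (eapply Rle_lt_trans; [apply Rmax_r | exact Ht]).
  change (Rabs (Rpower t x * exp (- t) - 0) < eps).
  rewrite Rminus_0_r, Rabs_pos_eq by (left; apply Rmult_lt_0_compat; [apply Rpower_pos | apply exp_pos]).
  unfold Rpower. rewrite <- exp_plus, <- (exp_ln eps) by apply cond_pos.
  apply exp_increasing. pose proof (mul_ln_le_half x t Hx Ht0). lra.
Qed.

Lemma is_RInt_gen_gamma_integrand_recurrence (x : R) : 0 < x ->
  is_RInt_gen (fun t => x * gamma_integrand x t - gamma_integrand (x + 1) t)
    (at_right 0) (Rbar_locally p_infty) 0.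
Proof.
  intro Hx. set (k := fun t => Rpower t x * exp (- t)).
  assert (Hk : forall t, 0 < t -> Derive k t = x * gamma_integrand x t - gamma_integrand (x + 1) t)
    by (intros t Ht; apply is_derive_unique, is_derive_Rpower_mul_exp_opp, Ht).
  assert (Hmin : forall a b t, 0 < a -> 0 < b -> Rmin a b <= t -> 0 < t)
    by (intros a b t Ha Hb Ht; pose proof (Rmin_glb_lt a b 0 Ha Hb); lra).
  apply (is_RInt_gen_ext (Derive k)).
  { apply filter_prod_at_right_0_pinfty. intros a b Ha Hb t [Ht _].
    apply Hk, (Hmin a b t Ha Hb), Rlt_le, Ht. }
  enough (H : is_RInt_gen (Derive k) (at_right 0) (Rbar_locally p_infty) (0 - 0))
    by (rewrite Rminus_0_r in H; exact H).
  apply is_RInt_gen_Derive.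
  - apply filter_prod_at_right_0_pinfty. intros a b Ha Hb t [Ht _].
    eexists. apply is_derive_Rpower_mul_exp_opp, (Hmin a b t Ha Hb Ht).
  - apply filter_prod_at_right_0_pinfty. intros a b Ha Hb t [Ht _].
    assert (Ht0 : 0 < t) by exact (Hmin a b t Ha Hb Ht).
    apply (continuous_ext_loc _ (fun u => x * gamma_integrand x u - gamma_integrand (x + 1) u)).
    + apply (filter_imp (fun u => 0 < u)); [intros u Hu; symmetry; apply Hk, Hu |].
      apply (open_gt 0 t Ht0).
    + apply (continuous_minus (fun u => x * gamma_integrand x u) (gamma_integrand (x + 1))).
      * apply (continuous_scal_r x (gamma_integrand x)), continuous_gamma_integrand, Ht0.
      * apply continuous_gamma_integrand, Ht0.
  - apply lim_Rpower_mul_exp_opp_0, Hx.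
  - apply lim_Rpower_mul_exp_opp_pinfty, Hx.
Qed.

Lemma is_Gamma_succ (x L : R) : 0 < x -> is_Gamma x L -> is_Gamma (x + 1) (x * L).
Proof.
  intros Hx HL.
  assert (H := is_RInt_gen_minus _ _ _ _
                 (is_RInt_gen_scal _ x _ HL) (is_RInt_gen_gamma_integrand_recurrence x Hx)).
  replace (x * L) with (minus (scal x L) 0) by (unfold minus, plus, opp, scal; simpl; unfold mult; simpl; ring).
  revert H. apply is_RInt_gen_ext, filter_prod_at_right_0_pinfty. intros a b _ _ t _.
  unfold minus, plus, opp, scal; simpl; unfold mult; simpl. ring.
Qed.

Lemma is_Gamma_pred (x L : R) : 0 < x -> is_Gamma (x + 1) L -> is_Gamma x (L / x).
Proof.
  intros Hx HL.
  assert (H := is_RInt_gen_scal _ (/ x) _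
                 (is_RInt_gen_plus _ _ _ _ HL (is_RInt_gen_gamma_integrand_recurrence x Hx))).
  replace (L / x) with (scal (/ x) (plus L 0)) by (unfold plus, scal; simpl; unfold mult; simpl; field; lra).
  revert H. apply is_RInt_gen_ext, filter_prod_at_right_0_pinfty. intros a b _ _ t _.
  unfold plus, scal; simpl; unfold mult; simpl. field. lra.
Qed.

Lemma is_Gamma_1 : is_Gamma 1 1.
Proof.
  set (h := fun t => - exp (- t)).
  assert (Hh : forall t, is_derive h t (exp (- t))) by (intro t; unfold h; auto_derive; [exact I | ring]).
  apply (is_RInt_gen_ext (Derive h)).
  { apply filter_prod_at_right_0_pinfty. intros a b _ _ t _.
    rewrite (is_derive_unique _ _ _ (Hh t)). unfold gamma_integrand.
    rewrite Rminus_diag. unfold Rpower. rewrite Rmult_0_l, exp_0. symmetry; apply Rmult_1_l. }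
  replace 1 with (0 - -1) by ring. apply is_RInt_gen_Derive.
  - apply filter_prod_at_right_0_pinfty. intros a b _ _ t _. eexists. apply Hh.
  - apply filter_prod_at_right_0_pinfty. intros a b _ _ t _.
    apply (continuous_ext (fun u => exp (- u))).
    + intro u. symmetry. apply is_derive_unique, Hh.
    + apply (ex_derive_continuous (V := R_NormedModule)). auto_derive; auto.
  - apply filterlim_locally. intro eps. exists eps. intros t Ht Ht0.
    change (Rabs (t - 0) < eps) in Ht. rewrite Rminus_0_r, Rabs_pos_eq in Ht by lra.
    change (Rabs (h t - -1) < eps). unfold h.
    pose proof (exp_ineq1_le (- t)).
    assert (exp (- t) < 1) by (rewrite <- exp_0; apply exp_increasing; lra).
    rewrite Rabs_pos_eq; lra.
  - apply filterlim_locally. intro eps. exists (- ln eps). intros t Ht.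
    change (Rabs (h t - 0) < eps). unfold h.
    rewrite Rminus_0_r, Rabs_Ropp, Rabs_pos_eq by (left; apply exp_pos).
    rewrite <- (exp_ln eps) by apply cond_pos. apply exp_increasing. lra.
Qed.

Section NonnegativeImproperIntegral.

Variable f : R -> R.
Hypothesis f_cont : forall t, 0 < t -> continuous f t.
Hypothesis f_ge0 : forall t, 0 < t -> 0 <= f t.

Lemma ex_RInt_pos_bounds (a b : R) : 0 < a -> 0 < b -> ex_RInt f a b.
Proof.
  intros Ha Hb. apply (ex_RInt_continuous (V := R_CompleteNormedModule)).
  intros t Ht. apply f_cont. pose proof (Rmin_glb_lt a b 0 Ha Hb). lra.
Qed.

Lemma RInt_le_widen (a a0 b0 b : R) :
  0 < a -> a <= a0 -> a0 <= b0 -> b0 <= b -> RInt f a0 b0 <= RInt f a b.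
Proof.
  intros Ha Haa0 Hab0 Hbb0.
  assert (Hex : forall u v, a <= u -> a <= v -> ex_RInt f u v)
    by (intros u v Hu Hv; apply ex_RInt_pos_bounds; lra).
  rewrite <- (RInt_Chasles f a a0 b), <- (RInt_Chasles f a0 b0 b) by (apply Hex; lra).
  assert (0 <= RInt f a a0) by (apply RInt_ge_0; [lra | apply Hex; lra | intros; apply f_ge0; lra]).
  assert (0 <= RInt f b0 b) by (apply RInt_ge_0; [lra | apply Hex; lra | intros; apply f_ge0; lra]).
  unfold plus; simpl. lra.
Qed.

Lemma is_RInt_gen_nonneg_bounded (B : R) :
  (forall a b, 0 < a -> a <= b -> RInt f a b <= B) ->
  exists L, is_RInt_gen f (at_right 0) (Rbar_locally p_infty) L /\
            forall a b, 0 < a -> a <= b -> RInt f a b <= L.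
Proof.
  intro HB.
  set (E := fun y => exists a b, 0 < a /\ a <= b /\ y = RInt f a b).
  assert (HEb : bound E) by (exists B; intros y (a & b & Ha & Hab & ->); auto).
  assert (HE1 : E (RInt f 1 1)) by (exists 1, 1; repeat split; lra).
  destruct (completeness E HEb (ex_intro _ _ HE1)) as [L [HLub HLleast]].
  assert (HLE : forall a b, 0 < a -> a <= b -> RInt f a b <= L)
    by (intros a b Ha Hab; apply HLub; exists a, b; auto).
  exists L. split; [| exact HLE].
  intros P [eps HP].
  assert (Happrox : exists a0 b0, 0 < a0 /\ a0 <= b0 /\ L - eps < RInt f a0 b0).
  { apply NNPP. intro Hn.
    assert (L <= L - eps).
    { apply HLleast. intros y (a & b & Ha & Hab & ->).
      apply Rnot_lt_le. intro Hlt. apply Hn. exists a, b. auto. }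
    pose proof (cond_pos eps). lra. }
  destruct Happrox as (a0 & b0 & Ha0 & Hab0 & Hlt).
  apply (Filter_prod _ _ _ (fun a => 0 < a < a0) (fun b => b0 < b)).
  - exists (mkposreal a0 Ha0). intros y Hy Hy0.
    change (Rabs (y - 0) < a0) in Hy. rewrite Rminus_0_r, Rabs_pos_eq in Hy by lra. lra.
  - exists b0. auto.
  - intros a b Ha Hb. exists (RInt f a b). split.
    + apply (RInt_correct (V := R_CompleteNormedModule)), ex_RInt_pos_bounds; lra.
    + apply HP. change (Rabs (RInt f a b - L) < eps). apply Rabs_lt_between.
      pose proof (RInt_le_widen a a0 b0 b). pose proof (HLE a b). simpl in *. lra.
Qed.

End NonnegativeImproperIntegral.

(* [sqrt t <= 1 + t], and [- (2 + t) e^(-t)] is a primitive of [(1 + t) e^(-t)]. *)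
Lemma RInt_gamma_integrand_3_2_le (a b : R) : 0 < a -> a <= b ->
  RInt (gamma_integrand (/ 2 + 1)) a b <= 2.
Proof.
  intros Ha Hab.
  set (g := fun t => (1 + t) * exp (- t)).
  set (G := fun t => - ((2 + t) * exp (- t))).
  assert (HG : forall t, is_derive G t (g t)) by (intro t; unfold G, g; auto_derive; [exact I | ring]).
  assert (Hle : RInt (gamma_integrand (/ 2 + 1)) a b <= RInt g a b).
  { apply RInt_le; [exact Hab | | |].
    - apply ex_RInt_pos_bounds; [intros; apply continuous_gamma_integrand; auto | lra | lra].
    - apply (ex_RInt_continuous (V := R_CompleteNormedModule)). intros t _.
      apply (ex_derive_continuous (V := R_NormedModule)). unfold g. auto_derive. exact I.
    - intros t Ht. unfold gamma_integrand, g. apply Rmult_le_compat_r; [left; apply exp_pos |].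
      replace (/ 2 + 1 - 1) with (/ 2) by ring. rewrite Rpower_sqrt by lra.
      pose proof (sqrt_sqrt t). pose proof (sqrt_pos t). nra. }
  rewrite (is_RInt_unique g a b (minus (G b) (G a))) in Hle
    by (apply (is_RInt_derive (V := R_CompleteNormedModule)); intros; [apply HG |];
        apply (ex_derive_continuous (V := R_NormedModule)); unfold g; auto_derive; exact I).
  unfold minus, plus, opp, G in Hle; simpl in Hle.
  assert (Hinv : exp a * exp (- a) = 1) by (rewrite <- exp_plus, Rplus_opp_r; apply exp_0).
  pose proof (exp_ineq1_le a). pose proof (exp_pos (- a)). pose proof (exp_pos (- b)). nra.
Qed.

Lemma ex_is_Gamma_3_2 : exists L, 0 < L /\ is_Gamma (/ 2 + 1) L.
Proof.
  set (f := gamma_integrand (/ 2 + 1)).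
  assert (Hcont : forall t, 0 < t -> continuous f t) by (intros; apply continuous_gamma_integrand; auto).
  assert (Hge0 : forall t, 0 < t -> 0 <= f t) by (intros; left; apply gamma_integrand_pos).
  destruct (is_RInt_gen_nonneg_bounded f Hcont Hge0 2 RInt_gamma_integrand_3_2_le)
    as [L [HL HLub]].
  exists L. split; [| exact HL].
  apply Rlt_le_trans with (RInt f 1 2); [| apply HLub; lra].
  apply RInt_gt_0; [lra | intros; apply gamma_integrand_pos | intros; apply Hcont; lra].
Qed.

Lemma ex_is_Gamma_half (n : nat) : exists L, 0 < L /\ is_Gamma ((INR n + 1) / 2) L.
Proof.
  enough (H : forall n, (exists L, 0 < L /\ is_Gamma ((INR n + 1) / 2) L) /\
                        (exists L, 0 < L /\ is_Gamma ((INR (S n) + 1) / 2) L))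
    by exact (proj1 (H n)).
  intro m. induction m as [| m IH]; split.
  - destruct ex_is_Gamma_3_2 as [L [HL HG]]. exists (L / / 2).
    split; [apply Rdiv_lt_0_compat; lra |].
    replace ((INR 0 + 1) / 2) with (/ 2) by (simpl; field). apply is_Gamma_pred; [lra | exact HG].
  - exists 1. split; [lra |]. replace ((INR 1 + 1) / 2) with 1 by (simpl; field). exact is_Gamma_1.
  - apply IH.
  - destruct IH as [[L [HL HG]] _]. exists ((INR m + 1) / 2 * L).
    pose proof (pos_INR m).
    split; [apply Rmult_lt_0_compat; lra |].
    replace ((INR (S (S m)) + 1) / 2) with ((INR m + 1) / 2 + 1) by (rewrite !S_INR; field).
    apply is_Gamma_succ; [lra | exact HG].
Qed.

Definition Gamma_half (n : nat) : R := Gamma ((INR n + 1) / 2).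

Lemma Gamma_half_pos (n : nat) : 0 < Gamma_half n.
Proof. destruct (ex_is_Gamma_half n) as [L [HL HG]]. unfold Gamma_half. now rewrite (is_Gamma_unique _ _ HG). Qed.

Lemma Gamma_half_SS (n : nat) : Gamma_half (S (S n)) = (INR n + 1) / 2 * Gamma_half n.
Proof.
  destruct (ex_is_Gamma_half n) as [L [_ HG]]. unfold Gamma_half.
  rewrite (is_Gamma_unique _ _ HG). apply is_Gamma_unique.
  replace ((INR (S (S n)) + 1) / 2) with ((INR n + 1) / 2 + 1) by (rewrite !S_INR; field).
  apply is_Gamma_succ; [pose proof (pos_INR n); lra | exact HG].
Qed.

Definition Gamma_half_ratio (n : nat) : R := Gamma_half (S n) / Gamma_half n.

Lemma Gamma_half_ratio_pos (n : nat) : 0 < Gamma_half_ratio n.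
Proof. apply Rdiv_lt_0_compat; apply Gamma_half_pos. Qed.

Lemma Gamma_half_ratio_S (n : nat) :
  Gamma_half_ratio (S n) = (INR n + 1) / (2 * Gamma_half_ratio n).
Proof.
  unfold Gamma_half_ratio. rewrite Gamma_half_SS.
  pose proof (Gamma_half_pos n). pose proof (Gamma_half_pos (S n)). field. lra.
Qed.

Lemma omega_Gamma_half_ratio (n : nat) : omega n =
  if Nat.odd n then (2 * INR n + 3) / (INR n + 1) * Gamma_half_ratio n
  else (INR n + 1) / Gamma_half_ratio n.
Proof.
  unfold omega, Gamma_half_ratio, Gamma_half.
  replace (INR n / 2 + 1) with ((INR (S n) + 1) / 2) by (rewrite S_INR; field).
  destruct (Nat.odd n); [reflexivity |].
  pose proof (Gamma_half_pos n). pose proof (Gamma_half_pos (S n)). unfold Gamma_half in *.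
  field. lra.
Qed.

Lemma odd_succ_negb (n : nat) : Nat.odd (S n) = negb (Nat.odd n).
Proof. rewrite Nat.odd_succ, Nat.negb_odd. reflexivity. Qed.

Lemma tau_even (n : nat) : Nat.odd n = false ->
  tau n = (INR n + 1) / (2 * (INR n + 2) * Gamma_half_ratio n).
Proof.
  intro Hn. unfold tau. rewrite !omega_Gamma_half_ratio, odd_succ_negb, Hn, Gamma_half_ratio_S, S_INR.
  pose proof (pos_INR n). pose proof (Gamma_half_ratio_pos n). simpl. field. lra.
Qed.

Lemma tau_odd (n : nat) : Nat.odd n = true -> tau n = Gamma_half_ratio n / (INR n + 1).
Proof.
  intro Hn. unfold tau. rewrite !omega_Gamma_half_ratio, odd_succ_negb, Hn, Gamma_half_ratio_S, S_INR.
  pose proof (pos_INR n). pose proof (Gamma_half_ratio_pos n). simpl. field. lra.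
Qed.

Lemma omega_pos (n : nat) : 0 < omega n.
Proof.
  rewrite omega_Gamma_half_ratio. pose proof (pos_INR n). pose proof (Gamma_half_ratio_pos n).
  destruct (Nat.odd n).
  - apply Rmult_lt_0_compat; [apply Rdiv_lt_0_compat |]; lra.
  - apply Rdiv_lt_0_compat; lra.
Qed.

Lemma tau_pos (n : nat) : 0 < tau n.
Proof.
  pose proof (pos_INR n). pose proof (Gamma_half_ratio_pos n).
  destruct (Nat.odd n) eqn:Hn; [rewrite tau_odd by exact Hn | rewrite tau_even by exact Hn].
  - apply Rdiv_lt_0_compat; lra.
  - apply Rdiv_lt_0_compat; [lra |]. apply Rmult_lt_0_compat; lra.
Qed.

Lemma tau_S_le (n : nat) : tau (S n) <= tau n.
Proof.
  pose proof (pos_INR n). pose proof (Gamma_half_ratio_pos n).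
  destruct (Nat.odd n) eqn:Hn.
  - rewrite tau_even, tau_odd, Gamma_half_ratio_S, S_INR by (rewrite ?odd_succ_negb, Hn; reflexivity).
    set (q := Gamma_half_ratio n) in *.
    assert (Hgap : 0 < q / ((INR n + 1) * (INR n + 3))) by (apply Rdiv_lt_0_compat; nra).
    replace (q / ((INR n + 1) * (INR n + 3))) with
      (q / (INR n + 1) - (INR n + 1 + 1) / (2 * (INR n + 1 + 2) * ((INR n + 1) / (2 * q))))
      in Hgap by (field; lra).
    lra.
  - rewrite tau_odd, tau_even, Gamma_half_ratio_S, S_INR by (rewrite ?odd_succ_negb, Hn; reflexivity).
    right. field. lra.
Qed.

Theorem lemma6p4 :
  (forall n : nat, 0 < omega n) /\
  (forall n : nat, omega n < omega (S n)) /\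
  (forall n : nat, 0 < tau n) /\
  (forall n : nat, tau (S n) <= tau n).
Proof.
  split; [exact omega_pos |]. split; [| split; [exact tau_pos | exact tau_S_le]].
  intro n. pose proof (tau_pos n) as Htau. unfold tau in Htau. lra.
Qed.
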